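(* Let $\mathbb{F}$ be an algebraically closed field with $\mathrm{Char}(\mathbb{F})\ne2$, and let $y,z\in\mathbb{F}$ be nonzero with $y\neq1$, $y\neq-1$, $z\neq1$, $yz\neq1$, $(y+1)z\neq2$. Then the pair $A=\begin{pmatrix}0&z&0\\1&0&1-z\\0&1&0\end{pmatrix}$, $A^*=\begin{pmatrix}0&yz&0\\1&0&yz-1\\0&-1&0\end{pmatrix}$ is a Leonard pair in $\mathrm{Mat}_3(\mathbb{F})$, and it has a parameter array with $\theta_0=1,\theta_1=0,\theta_2=-1$, $\theta^*_0=1,\theta^*_1=0,\theta^*_2=-1$, $\varphi_1=\varphi_2=(y+1)z-2$, $\phi_1=\phi_2=(y+1)z$.
   Context: A Leonard pair in $\mathrm{Mat}_{d+1}(\mathbb{F})$ is a pair of matrices $A,A^*$ such that there is a basis of $\mathbb{F}^{d+1}$ in which $A$ is irreducible tridiagonal (tridiagonal with all sub/superdiagonal entries nonzero) and $A^*$ diagonal, and a basis in which $A^*$ is irreducible tridiagonal and $A$ diagonal. A Leonard system is $(A,\{E_i\}_{i=0}^d,A^*,\{E^*_i\}_{i=0}^d)$ where $A,A^*$ each have $d+1$ distinct eigenvalues, $\{E_i\},\{E^*_i\}$ are orderings of their primitive idempotents, and $E_iA^*E_j,E^*_iAE^*_j$ are $0$ for $|i-j|>1$ and nonzero for $|i-j|=1$. Eigenvalue sequences: $AE_i=\theta_iE_i$, $A^*E^*_i=\theta^*_iE^*_i$. First split sequence: for nonzero $v\in E^*_0V$, $u_i=(A-\theta_{i-1}I)\cdots(A-\theta_0I)v$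 form a basis in which $A^*$ is upper bidiagonal with diagonal $\theta^*_0,\dots,\theta^*_d$ and superdiagonal $\varphi_1,\dots,\varphi_d$. Second split sequence $\{\phi_i\}$: first split sequence of $(A,\{E_{d-i}\},A^*,\{E^*_i\})$. Parameter array $(\{\theta_i\},\{\theta^*_i\},\{\varphi_i\},\{\phi_i\})$; a parameter array of a Leonard pair is that of any associated Leonard system. *)

From mathcomp Require Import all_boot all_order all_algebra.
Set Implicit Arguments. Unset Strict Implicit. Unset Printing Implicit Defensive.
Import GRing.Theory.
Local Open Scope ring_scope.

Section Leonard.
Variables (F : fieldType) (d : nat).
Local Notation n := d.+1.

Definition far (i j : nat) : bool := (i.+1 < j)%N || (j.+1 < i)%N.
Definition adj (i j : nat) : bool := (i.+1 == j) || (j.+1 == i).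

Definition irr_tridiag (M : 'M[F]_n) : Prop :=
  forall i j : 'I_n, (far i j -> M i j = 0) /\ (adj i j -> M i j != 0).

Definition leonard_pair (A As : 'M[F]_n) : Prop :=
  (exists P : 'M[F]_n, P \in unitmx /\
     irr_tridiag (invmx P *m A *m P) /\ is_diag_mx (invmx P *m As *m P)) /\
  (exists Q : 'M[F]_n, Q \in unitmx /\
     irr_tridiag (invmx Q *m As *m Q) /\ is_diag_mx (invmx Q *m A *m Q)).

Definition prim_idem_seq (A : 'M[F]_n) (th : 'I_n -> F) (E : 'I_n -> 'M[F]_n) : Prop :=
  [/\ injective th,
      forall i, eigenvalue A (th i),
      forall i, A *m E i = th i *: E i,
      forall i j, E i *m E j = (if i == j then E i else 0)
    & \sum_i E i = 1%:M].

Definition leonard_system (A : 'M[F]_n) (E : 'I_n -> 'M[F]_n)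
    (As : 'M[F]_n) (Es : 'I_n -> 'M[F]_n) (th ths : 'I_n -> F) : Prop :=
  [/\ prim_idem_seq A th E, prim_idem_seq As ths Es,
      forall i j : 'I_n, (far i j -> E i *m As *m E j = 0) /\
                         (adj i j -> E i *m As *m E j != 0)
    & forall i j : 'I_n, (far i j -> Es i *m A *m Es j = 0) /\
                         (adj i j -> Es i *m A *m Es j != 0)].

(* upper bidiagonal matrix with diagonal ths and superdiagonal phi_1..phi_d
   (phi at index 0 is unused) *)
Definition bidiag (ths phi : 'I_n -> F) : 'M[F]_n :=
  \matrix_(i, j) (if i == j then ths i
                  else if (i.+1 == j)%N then phi j else 0).

Definition split_basis (A : 'M[F]_n) (th : 'I_n -> F) (v : 'cV[F]_n) : 'M[F]_n :=
  \matrix_(i, j) ((\prod_(k < n | (k < j)%N) (A - (th k)%:M)) *m v) i 0.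

Definition first_split_seq (A : 'M[F]_n) (th : 'I_n -> F) (As : 'M[F]_n)
    (ths : 'I_n -> F) (Es : 'I_n -> 'M[F]_n) (phi : 'I_n -> F) : Prop :=
  forall v : 'cV[F]_n, v != 0 -> Es ord0 *m v = v ->
    split_basis A th v \in unitmx /\
    As *m split_basis A th v = split_basis A th v *m bidiag ths phi.

(* The second split sequence is the first split sequence of
   (A, {E_{d-i}}, As, {Es_i}), whose eigenvalue sequence is th_{d-i}. *)
Definition parameter_array (A As : 'M[F]_n) (th ths phi phis : 'I_n -> F) : Prop :=
  exists (E Es : 'I_n -> 'M[F]_n),
    [/\ leonard_system A E As Es th ths,
        first_split_seq A th As ths Es phi
      & first_split_seq A (fun i => th (rev_ord i)) As ths Es phis].

End Leonard.

Definition mx3 (F : fieldType) (a00 a01 a02 a10 a11 a12 a20 a21 a22 : F) : 'M[F]_3 :=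
  \matrix_(i < 3, j < 3)
    nth 0 (nth [::] [:: [:: a00; a01; a02]; [:: a10; a11; a12]; [:: a20; a21; a22]] i) j.

From mathcomp Require Import all_boot all_order all_algebra all_field.
From mathcomp Require Import ring.
Import GRing.Theory.
Set Implicit Arguments.
Unset Strict Implicit.
Unset Printing Implicit Defensive.
Local Open Scope ring_scope.

(** The columns of [Q] and [P] below are eigenvectors of [A] and [A*] for the
    eigenvalues 1, 0, -1, and in either basis the other matrix becomes the same
    irreducible tridiagonal matrix [T]: the pair is self-dual.  With the primitive
    idempotents written as [E_i = Q e_ii Q^-1], the product [E_i M E_j] is
    [(Q^-1 M Q)_ij] times the nonzero matrix [Q e_ij Q^-1], so the conditions on a
    Leonard system are read off [T].  Finally [E*_0 V] is spanned by the first
    column of [P]; its split basis is an explicit matrix of determinant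
    [s^2 (s - 2)], where [s = (y + 1) z], on which [A*] acts by the bidiagonal
    matrix carrying the claimed split sequence. *)

Section EigenIdempotents.
Variables (F : fieldType) (d : nat).
Local Notation n := d.+1.
Implicit Types (A As M P Q : 'M[F]_n) (th ths : 'I_n -> F).

Lemma invmx_left M N : N *m M = 1%:M -> invmx M = N.
Proof.
move=> NM1; have uM := (mulmx1_unit NM1).2.
by rewrite -[invmx M]mul1mx -NM1 mulmxK.
Qed.

Definition eigen_idem Q (i : 'I_n) : 'M[F]_n := Q *m delta_mx i i *m invmx Q.

Lemma mul_diag_delta_mx (r : 'rV[F]_n) (i j : 'I_n) :
  diag_mx r *m delta_mx i j = r 0 i *: delta_mx i j.
Proof.
apply/matrixP => a b; rewrite mul_diag_mx !mxE.
by case: eqP => [-> | _]; rewrite ?mulr0.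
Qed.

Lemma mul_delta_mx_delta M (i j : 'I_n) :
  delta_mx i i *m M *m delta_mx j j = M i j *: delta_mx i j.
Proof.
have entry : delta_mx 0 i *m M *m delta_mx j 0 = (M i j)%:M :> 'M_1.
  by rewrite -rowE -colE [LHS]mx11_scalar !mxE.
rewrite -(mul_delta_mx (0 : 'I_1) i i) -(mul_delta_mx (0 : 'I_1) j j).
transitivity (delta_mx i (0 : 'I_1) *m (delta_mx 0 i *m M *m delta_mx j 0) *m delta_mx (0 : 'I_1) j : 'M_n).
  by rewrite !mulmxA.
by rewrite entry mul_mx_scalar -scalemxAl mul_delta_mx.
Qed.

Lemma eigen_idem_cV Q (i : 'I_n) (v : 'cV[F]_n) :
  eigen_idem Q i *m v = (invmx Q *m v) i 0 *: col i Q.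
Proof.
rewrite /eigen_idem -(mul_delta_mx (0 : 'I_1) i i) colE -!mulmxA -rowE.
by rewrite [row i _]mx11_scalar mul_mx_scalar -scalemxAr !mxE.
Qed.

Lemma eigen_idem_conj Q M (i j : 'I_n) :
  eigen_idem Q i *m M *m eigen_idem Q j
    = Q *m ((invmx Q *m M *m Q) i j *: delta_mx i j) *m invmx Q.
Proof. by rewrite /eigen_idem -mul_delta_mx_delta !mulmxA. Qed.

Lemma eigen_idem_conj_eq0 Q M (i j : 'I_n) : Q \in unitmx ->
  (eigen_idem Q i *m M *m eigen_idem Q j == 0) = ((invmx Q *m M *m Q) i j == 0).
Proof.
move=> uQ; rewrite eigen_idem_conj.
have delta_neq0 : delta_mx i j != 0 :> 'M[F]_n.
  by apply/eqP => /matrixP/(_ i j); rewrite !mxE !eqxx; apply/eqP; exact: oner_neq0.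
apply/eqP/eqP => [| ->]; last by rewrite scale0r mulmx0 mul0mx.
move/(congr1 (mulmx^~ Q)); rewrite mulmxKV // mul0mx.
move/(congr1 (mulmx (invmx Q))); rewrite mulKmx // mulmx0 => /eqP.
by rewrite scalemx_eq0 (negbTE delta_neq0) orbF => /eqP.
Qed.

Lemma prim_idem_seq_eigen_idem A Q th : Q \in unitmx -> injective th ->
  invmx Q *m A *m Q = diag_mx (\row_i th i) -> prim_idem_seq A th (eigen_idem Q).
Proof.
move=> uQ th_inj diagA.
have defA : A = Q *m diag_mx (\row_i th i) *m invmx Q.
  by rewrite -diagA mulmxA mulmxK // mulKVmx.
have left_eigen i : row i (invmx Q) *m A = th i *: row i (invmx Q).
  by rewrite -row_mul {1}defA mulmxA mulKmx // row_mul row_diag_mx mxE -scalemxAl -rowE.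
split => //.
- move=> i; apply/eigenvalueP; exists (row i (invmx Q)); first exact: left_eigen.
  apply: contra_neq (oner_neq0 F) => row0.
  have := congr1 (fun v => (v *m Q) 0 i) row0.
  by rewrite /= -row_mul mulVmx // row1 mul0mx !mxE !eqxx.
- move=> i; rewrite {1}defA /eigen_idem !mulmxA mulmxKV // -(mulmxA Q).
  by rewrite mul_diag_delta_mx mxE -scalemxAr -scalemxAl.
- move=> i j; rewrite /eigen_idem !mulmxA mulmxKV // -(mulmxA Q) mul_delta_mx_cond.
  by case: eqVneq => [<- | _]; rewrite ?mulr1n ?mulr0n ?mulmx0 ?mul0mx.
- by rewrite /eigen_idem -mulmx_suml -mulmx_sumr -mx1_sum_delta mulmx1 mulmxV.
Qed.

Lemma irr_tridiag_eigen_idem Q M : Q \in unitmx -> irr_tridiag (invmx Q *m M *m Q) ->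
  forall i j : 'I_n, (far i j -> eigen_idem Q i *m M *m eigen_idem Q j = 0) /\
                     (adj i j -> eigen_idem Q i *m M *m eigen_idem Q j != 0).
Proof.
move=> uQ tri i j; have [far0 adj0] := tri i j.
by split => [/far0 /eqP | /adj0]; rewrite -(eigen_idem_conj_eq0 M i j uQ) // => /eqP.
Qed.

Lemma leonard_system_eigen_idem A As P Q th ths :
  P \in unitmx -> Q \in unitmx -> injective th -> injective ths ->
  invmx Q *m A *m Q = diag_mx (\row_i th i) ->
  invmx P *m As *m P = diag_mx (\row_i ths i) ->
  irr_tridiag (invmx Q *m As *m Q) -> irr_tridiag (invmx P *m A *m P) ->
  leonard_system A (eigen_idem Q) As (eigen_idem P) th ths.
Proof.
move=> uP uQ th_inj ths_inj diagA diagAs triAs triA.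
split; [exact: prim_idem_seq_eigen_idem | exact: prim_idem_seq_eigen_idem
       | exact: irr_tridiag_eigen_idem | exact: irr_tridiag_eigen_idem].
Qed.

Lemma split_basisZ A th (c : F) (v : 'cV[F]_n) :
  split_basis A th (c *: v) = c *: split_basis A th v.
Proof. by apply/matrixP => i j; rewrite [LHS]mxE [RHS]mxE [in RHS]mxE -scalemxAr mxE. Qed.

Lemma first_split_seq_eigen_idem A th As ths P phi :
  split_basis A th (col ord0 P) \in unitmx ->
  As *m split_basis A th (col ord0 P) = split_basis A th (col ord0 P) *m bidiag ths phi ->
  first_split_seq A th As ths (eigen_idem P) phi.
Proof.
move=> uU splitU v v_neq0; rewrite eigen_idem_cV => defv.
have c_neq0 : (invmx P *m v) ord0 0 != 0.
  by apply: contra_neq v_neq0 => c0; rewrite -defv c0 scale0r.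
rewrite -defv split_basisZ unitmxZ ?unitfE //.
by rewrite -scalemxAr splitU scalemxAl.
Qed.

End EigenIdempotents.

Ltac mx3_ext :=
  apply/matrixP; case=> [[|[|[|?]]] ?] //; case=> [[|[|[|?]]] ?] //.
Ltac mx_simpl := repeat progress rewrite ?mxE ?big_ord_recr ?big_ord0 ?mulr1n ?mulr0n /=.

Section ThreeByThree.
Variable F : fieldType.

Lemma det_mx3 (a b c d e f g h i : F) :
  \det (mx3 a b c d e f g h i) = a * (e * i - f * h) - b * (d * i - f * g) + c * (d * h - e * g).
Proof.
rewrite (expand_det_row _ ord0) !big_ord_recr big_ord0 /= /cofactor.
rewrite !(expand_det_row _ ord0) !big_ord_recr !big_ord0 /= /cofactor.
rewrite !det_mx11 !mxE /=; ring.
Qed.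

Lemma irr_tridiag_mx3 (a b d e f h i : F) : b != 0 -> d != 0 -> f != 0 -> h != 0 ->
  irr_tridiag (mx3 a b 0 d e f 0 h i).
Proof.
by move=> *; case=> [[|[|[|?]]] ?] //; case=> [[|[|[|?]]] ?]; split; rewrite ?mxE.
Qed.

Lemma split_basis_mx3 (M : 'M[F]_3) th v : split_basis M th v =
  \matrix_(i, j) [:: v; (M - (th 0)%:M) *m v; (M - (th 0)%:M) *m (M - (th 1)%:M) *m v]`_j i 0.
Proof.
have w0 : widen_ord (leqnSn 2) (widen_ord (leqnSn 1) ord_max) = 0 :> 'I_3 by apply: val_inj.
have w1 : widen_ord (leqnSn 2) ord_max = 1 :> 'I_3 by apply: val_inj.
apply/matrixP => i; case=> [[|[|[|?]]] ?] //; rewrite [LHS]mxE [RHS]mxE /=;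
  by rewrite big_mkcond !big_ord_recr big_ord0 /= !mul1r ?mulr1 -?mulmxE ?mul1mx ?w0 ?w1.
Qed.

End ThreeByThree.

Section Example.
(* [w] stands for [y z], so that [s = (y + 1) z]. *)
Variables (F : fieldType) (z w : F).
Hypotheses (two_neq0 : 2%:R != 0 :> F) (s_neq0 : w + z != 0) (s_neq2 : w + z != 2%:R).
Local Notation s := (w + z).

Definition theta (i : 'I_3) : F := [:: 1; 0; -1]`_i.

Definition A := mx3 0 z 0  1 0 (1 - z)  0 1 0.
Definition As := mx3 0 w 0  1 0 (w - 1)  0 (-1) 0.

Definition Q := mx3 z (1 - z) z  1 0 (-1)  1 (-1) 1.
Definition Qinv := mx3 (1/2%:R) (1/2%:R) ((1 - z)/2%:R)  1 0 (- z)
                       (1/2%:R) (-1/2%:R) ((1 - z)/2%:R).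
Definition P := mx3 w (1 - w) w  1 0 (-1)  (-1) 1 (-1).
Definition Pinv := mx3 (1/2%:R) (1/2%:R) ((w - 1)/2%:R)  1 0 w
                       (1/2%:R) (-1/2%:R) ((w - 1)/2%:R).
Definition T := mx3 (s - 1) ((2%:R - s)/2%:R) 0  s 0 (- s)  0 ((s - 2%:R)/2%:R) (1 - s).

Lemma mul_Qinv_Q : Qinv *m Q = 1%:M.
Proof. rewrite /Qinv /Q; mx3_ext; mx_simpl; by field. Qed.
Lemma mul_Pinv_P : Pinv *m P = 1%:M.
Proof. rewrite /Pinv /P; mx3_ext; mx_simpl; by field. Qed.

Lemma Q_unit : Q \in unitmx.
Proof. exact: (mulmx1_unit mul_Qinv_Q).2. Qed.
Lemma P_unit : P \in unitmx.
Proof. exact: (mulmx1_unit mul_Pinv_P).2. Qed.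

Lemma conjQ_A : invmx Q *m A *m Q = diag_mx (\row_i theta i).
Proof. rewrite (invmx_left mul_Qinv_Q) /Qinv /A /Q /theta; mx3_ext; mx_simpl; by field. Qed.
Lemma conjP_As : invmx P *m As *m P = diag_mx (\row_i theta i).
Proof. rewrite (invmx_left mul_Pinv_P) /Pinv /As /P /theta; mx3_ext; mx_simpl; by field. Qed.
Lemma conjQ_As : invmx Q *m As *m Q = T.
Proof. rewrite (invmx_left mul_Qinv_Q) /Qinv /As /Q /T; mx3_ext; mx_simpl; by field. Qed.
Lemma conjP_A : invmx P *m A *m P = T.
Proof. rewrite (invmx_left mul_Pinv_P) /Pinv /A /P /T; mx3_ext; mx_simpl; by field. Qed.

Lemma theta_inj : injective theta.
Proof.
have one_neq_m1 : (1 : F) != -1 by rewrite -subr_eq0 opprK.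
move=> [[|[|[|i]]] hi] [[|[|[|j]]] hj] //; rewrite /theta /=;
  try by move=> _; apply: val_inj.
all: move/eqP; rewrite ?oppr_eq0 ?oner_eq0 ?(eq_sym 0) ?oppr_eq0 ?oner_eq0 //.
all: by rewrite ?(eq_sym (-1)) (negbTE one_neq_m1).
Qed.

Lemma irr_tridiag_T : irr_tridiag T.
Proof.
have half_neq0 (a : F) : a != 0 -> a / 2%:R != 0 by move=> a0; rewrite mulf_neq0 ?invr_eq0.
apply: irr_tridiag_mx3; rewrite ?half_neq0 ?oppr_eq0 ?subr_eq0 // eq_sym //.
Qed.

Definition U := mx3 w (z - w) (z * (s - 2%:R))  1 (s - 2%:R) (2%:R - s)  (-1) 2%:R (s - 2%:R).
Definition Urev := mx3 w s (z * s)  1 s s  (-1) 0 s.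

Lemma split_basis_P : split_basis A theta (col ord0 P) = U.
Proof. rewrite split_basis_mx3 /A /P /theta /U; mx3_ext; mx_simpl; ring. Qed.
Lemma split_basis_rev_P : split_basis A (fun i => theta (rev_ord i)) (col ord0 P) = Urev.
Proof. rewrite split_basis_mx3 /A /P /theta /Urev; mx3_ext; mx_simpl; ring. Qed.

Lemma det_U : \det U = s ^+ 2 * (s - 2%:R).
Proof. rewrite /U det_mx3; ring. Qed.
Lemma det_Urev : \det Urev = s ^+ 2 * (s - 2%:R).
Proof. rewrite /Urev det_mx3; ring. Qed.

Lemma As_U : As *m U = U *m bidiag theta (fun _ => s - 2%:R).
Proof. rewrite /As /U /bidiag /theta; mx3_ext; mx_simpl; ring. Qed.
Lemma As_Urev : As *m Urev = Urev *m bidiag theta (fun _ => s).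
Proof. rewrite /As /Urev /bidiag /theta; mx3_ext; mx_simpl; ring. Qed.

Lemma leonard_pair_A_As : leonard_pair A As.
Proof.
split.
- exists P; split; first exact: P_unit.
  by rewrite conjP_A conjP_As; split; [exact: irr_tridiag_T | exact: diag_mx_is_diag].
- exists Q; split; first exact: Q_unit.
  by rewrite conjQ_As conjQ_A; split; [exact: irr_tridiag_T | exact: diag_mx_is_diag].
Qed.

Lemma leonard_system_A_As : leonard_system A (eigen_idem Q) As (eigen_idem P) theta theta.
Proof.
apply: (leonard_system_eigen_idem P_unit Q_unit theta_inj theta_inj conjQ_A conjP_As).
  by rewrite conjQ_As; exact: irr_tridiag_T.
by rewrite conjP_A; exact: irr_tridiag_T.
Qed.

Lemma first_split_seq_A_As :
  first_split_seq A theta As theta (eigen_idem P) (fun _ => s - 2%:R).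
Proof.
apply: first_split_seq_eigen_idem; rewrite split_basis_P ?As_U //.
by rewrite unitmxE det_U unitfE mulf_neq0 ?expf_neq0 ?subr_eq0.
Qed.

Lemma second_split_seq_A_As :
  first_split_seq A (fun i => theta (rev_ord i)) As theta (eigen_idem P) (fun _ => s).
Proof.
apply: first_split_seq_eigen_idem; rewrite split_basis_rev_P ?As_Urev //.
by rewrite unitmxE det_Urev unitfE mulf_neq0 ?expf_neq0 ?subr_eq0.
Qed.

End Example.

Theorem proposition4p4 (F : closedFieldType) (y z : F) :
  ~~ (2%N \in [pchar F]) ->
  y != 0 -> z != 0 -> y != 1 -> y != -1 -> z != 1 -> y * z != 1 ->
  (y + 1) * z != 2%:R ->
  leonard_pair (mx3 0 z 0  1 0 (1 - z)  0 1 0)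
               (mx3 0 (y * z) 0  1 0 (y * z - 1)  0 (-1) 0) /\
  parameter_array (mx3 0 z 0  1 0 (1 - z)  0 1 0)
                  (mx3 0 (y * z) 0  1 0 (y * z - 1)  0 (-1) 0)
                  (fun i : 'I_3 => [:: 1; 0; -1]`_i)
                  (fun i : 'I_3 => [:: 1; 0; -1]`_i)
                  (fun _ : 'I_3 => (y + 1) * z - 2%:R)
                  (fun _ : 'I_3 => (y + 1) * z).
Proof.
(* Only [char F <> 2], [(y + 1) z <> 0] and [(y + 1) z <> 2] are needed. *)
move=> not_pchar2 _ z_neq0 _ y_neq_m1 _ _ s_neq2.
have two_neq0 : 2%:R != 0 :> F by move: not_pchar2; rewrite inE.
have s_neq0 : (y + 1) * z != 0 by rewrite mulf_neq0 // addr_eq0.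
rewrite (_ : (y + 1) * z = y * z + z) in s_neq0 s_neq2 *; last by ring.
split; first exact: leonard_pair_A_As.
exists (eigen_idem (Q z)), (eigen_idem (P (y * z))); split.
- exact: leonard_system_A_As.
- exact: first_split_seq_A_As.
- exact: second_split_seq_A_As.
Qed.
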